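(* Let $V$ be a real vector space with basis $e^1,\dots,e^k$ and a nondegenerate symmetric bilinear form $q_1$ with Gram matrix $G=(G^{ab})$, $G^{ab}=q_1(e^a,e^b)$. For real $k\times k$ matrices $X,Y$ put $[X,Y]_G:=XGY-YGX$ and $\{X,Y\}_G:=XGY+YGX$. Let $X:\lambda\to\mathbb{R}^{k\times k}$ be a map taking values in symmetric matrices such that for all $\alpha,\beta\in\lambda$: $[X(\alpha),X(\beta)]_G=0$ if $(\alpha|\beta)=0$, and $\{X(\alpha),X(\beta)\}_G=\frac12 X(\alpha\pm\beta)$ if $(\alpha|\beta)=\mp1$ and $\alpha\pm\beta\in\lambda$. Let $\mathcal{S}$ be the Clifford algebra of $V\otimes S$ defined below, with elements $\phi^a_\gamma=e^a\otimes f_\gamma$, and put $$\widehat{J}(\alpha_i):=\sum_{a,b=1}^k\sum_{\gamma,\delta=1}^l X(\alpha_i)_{ab}\,\Gamma(\alpha_i)_{\gamma\delta}\,\phi^a_\gamma\phi^b_\delta\in\mathcal S.$$ Then the assignment $X_i\mapsto\widehat J(\alpha_i)$ extends to a Lie algebra homomorphism from $\mathfrak k$ into $\mathcal S$ (with bracket the commutator $uv-vu$), and hence defines a finite-dimensional representation $\sigma$ of $\mathfrak k$ with $\sigma(X_i)=\widehat J(\alpha_i)$.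
   Context: Let $A=(a_{ij})_{1\le i,j\le n}$ be a symmetrizable simply laced generalized Cartan matrix (off-diagonal entries $0$ or $-1$); the Dynkin diagram has an edge between $i\ne j$ iff $a_{ij}=-1$. Let $\mathfrak g$ be the split real Kac–Moody algebra of $A$ with Chevalley generators $e_i,f_i$, Cartan subalgebra $\mathfrak h$ (from a real realization), simple roots $\alpha_1,\dots,\alpha_n\in\mathfrak h^*$, and let $(\cdot|\cdot)$ be the nondegenerate invariant symmetric bilinear form induced on $\mathfrak h^*$, with $(\alpha_i|\alpha_j)=a_{ij}$. Let $\mathfrak k$ be the fixed-point subalgebra of the Chevalley involution ($e_i\mapsto -f_i$, $f_i\mapsto-e_i$, $h\mapsto -h$), with Berman generators $X_i=e_i-f_i$; $\mathfrak k$ is presented by generators $X_1,\dots,X_n$ and relations $[X_i,[X_i,X_j]]=-X_j$ if $a_{ij}=-1$, $[X_i,X_j]=0$ if $a_{ij}=0$. Let $\lambda$ be the set of real roots consisting of the simple roots $\alpha_1,\dots,\alpha_n$ together with all $\alpha_i+\alpha_j$ for $i,j$ forming an edge of the Dynkin diagram. A generalized spin representation is a representation $\rho$ of $\mathfrak k$ with $\rho(X_i)^2=-\frac14\mathrm{id}$ for all $i$. Fix a finite-dimensional real vector space $S$ with positive definite inner product $q_2$ and orthonormal basis $f_1,\dots,f_l$, and a generalized spin representation $\rho:\mathfrak k\to\mathrm{End}(S)$ whose values $\rho(X_i)$ are anti-symmetric real matrices with respect to this basis (such exist, e.g. by realifying the generalized spin representations with compact image constructed by Hainke–Köhl–Levy);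 put $\Gamma(\alpha_i):=2\rho(X_i)$, an anti-symmetric real $l\times l$ matrix with entries $\Gamma(\alpha_i)_{\gamma\delta}$. Let $q=q_1\otimes q_2$ be the symmetric bilinear form on $V\otimes S$ with $q(e^a\otimes f_\gamma,e^b\otimes f_\delta)=G^{ab}\delta_{\gamma\delta}$, and let $\mathcal S$ be the Clifford algebra: the tensor algebra of $V\otimes S$ modulo the ideal generated by $w\otimes w-\frac12 q(w,w)\cdot 1$, so that $vw+wv=q(v,w)$ in $\mathcal S$. *)

From HB Require Import structures.
From mathcomp Require Import all_boot all_order all_algebra.
From mathcomp Require Import reals.
Set Implicit Arguments. Unset Strict Implicit. Unset Printing Implicit Defensive.
Import Order.TTheory GRing.Theory Num.Theory.
Local Open Scope ring_scope.

Record lie_alg (R : pzRingType) := LieAlg {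
  lie_car :> lmodType R;
  lie_br : lie_car -> lie_car -> lie_car;
  lie_brDl : forall (a : R) x y z, lie_br (a *: x + y) z = a *: lie_br x z + lie_br y z;
  lie_brDr : forall (a : R) x y z, lie_br z (a *: x + y) = a *: lie_br z x + lie_br z y;
  lie_alt : forall x, lie_br x x = 0;
  lie_jacobi : forall x y z,
    lie_br x (lie_br y z) + lie_br y (lie_br z x) + lie_br z (lie_br x y) = 0 }.

Definition lie_morph (R : pzRingType) (K : lie_alg R) (M : lmodType R)
  (brM : M -> M -> M) (f : K -> M) : Prop :=
  (forall (a : R) (x y : K), f (a *: x + y) = a *: f x + f y) /\
  (forall x y : K, f (lie_br x y) = brM (f x) (f y)).

(* Simply laced generalized Cartan matrix (hence symmetric, so symmetrizable). *)
Definition simply_laced_gcm (n : nat) (A : 'M[int]_n) : Prop :=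
  (forall i, A i i = 2) /\
  (forall i j, i != j -> A i j = 0 \/ A i j = -1) /\
  (forall i j, (A i j == 0) = (A j i == 0)).

(* Defining relations of k (Berman presentation) for elements y_i of L. *)
Definition k_relations (R : pzRingType) (n : nat) (A : 'M[int]_n)
  (L : lie_alg R) (y : 'I_n -> L) : Prop :=
  forall i j,
    (A i j = -1 -> lie_br (y i) (lie_br (y i) (y j)) = - y j) /\
    (A i j = 0 -> lie_br (y i) (y j) = 0).

Definition is_presented_k (R : pzRingType) (n : nat) (A : 'M[int]_n)
  (K : lie_alg R) (Xk : 'I_n -> K) : Prop :=
  k_relations A Xk /\
  forall (L : lie_alg R) (y : 'I_n -> L), k_relations A y ->
    exists! f : K -> L, lie_morph (@lie_br R L) f /\ forall i, f (Xk i) = y i.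

(* Elements of the root lattice are coordinate vectors w.r.t. the simple roots;
   alpha_i = simple_root i. *)
Definition simple_root (n : nat) (i : 'I_n) : 'rV[int]_n := delta_mx 0 i.

Definition rootform (n : nat) (A : 'M[int]_n) (al be : 'rV[int]_n) : int :=
  \sum_i \sum_j al 0 i * A i j * be 0 j.

Definition in_lambda (n : nat) (A : 'M[int]_n) (al : 'rV[int]_n) : bool :=
  [exists i, al == simple_root i] ||
  [exists i, exists j, (A i j == -1) && (al == simple_root i + simple_root j)].

Definition brG (R : pzRingType) (k : nat) (G X Y : 'M[R]_k) : 'M[R]_k :=
  X *m G *m Y - Y *m G *m X.
Definition acomG (R : pzRingType) (k : nat) (G X Y : 'M[R]_k) : 'M[R]_k :=
  X *m G *m Y + Y *m G *m X.

(* Clifford relations for generators phi a g = e^a (x) f_g of V (x) S, with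
   q(e^a (x) f_g, e^b (x) f_d) = G^{ab} delta_{gd}:  vw + wv = q(v,w). *)
Definition clifford_rel (R : pzRingType) (k l : nat) (G : 'M[R]_k)
  (B : algType R) (psi : 'I_k -> 'I_l -> B) : Prop :=
  forall a g b d, psi a g * psi b d + psi b d * psi a g = (G a b * (g == d)%:R)%:A.

Definition alg_morph (R : pzRingType) (A B : algType R) (f : A -> B) : Prop :=
  (forall (c : R) (x y : A), f (c *: x + y) = c *: f x + f y) /\
  (forall x y : A, f (x * y) = f x * f y) /\ f 1 = 1.

Definition is_clifford (R : pzRingType) (k l : nat) (G : 'M[R]_k)
  (Aalg : algType R) (phi : 'I_k -> 'I_l -> Aalg) : Prop :=
  clifford_rel G phi /\
  forall (B : algType R) (psi : 'I_k -> 'I_l -> B), clifford_rel G psi ->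
    exists! f : Aalg -> B, alg_morph f /\ forall a g, f (phi a g) = psi a g.

Definition Jhat (R : pzRingType) (k l : nat) (Aalg : algType R)
  (phi : 'I_k -> 'I_l -> Aalg) (Xa : 'M[R]_k) (Ga : 'M[R]_l) : Aalg :=
  \sum_(a < k) \sum_(b < k) \sum_(g < l) \sum_(d < l)
     (Xa a b * Ga g d) *: (phi a g * phi b d).

Definition commutator (R : pzRingType) (Aalg : algType R) (u v : Aalg) : Aalg :=
  u * v - v * u.

From HB Require Import structures.
From mathcomp Require Import all_boot all_order all_algebra.
From mathcomp Require Import reals.
From mathcomp Require Import ring lra.
Import Order.TTheory GRing.Theory Num.Theory.
Set Implicit Arguments. Unset Strict Implicit. Unset Printing Implicit Defensive.
Local Open Scope ring_scope.

(* The generators phi^a_gamma anticommute up to scalars, so the commutator of a quadratic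
   element sum_{u,v} M_uv phi_u phi_v with a generator is linear in the generators, and the
   commutator of two quadratic elements is again quadratic.  For coefficients X (x) Gamma with
   X symmetric and Gamma antisymmetric this gives
     [J(X, Gamma), J(X', Gamma')] = J(2 X G X', Gamma Gamma') - J(2 X' G X, Gamma' Gamma).
   With Gamma_i = 2 rho(X_i) the spin relations give Gamma_i^2 = -1, Gamma_i Gamma_j =
   Gamma_j Gamma_i when a_ij = 0, and Gamma_i Gamma_j Gamma_i = Gamma_j when a_ij = -1; with the
   hypotheses on X this shows that the J(alpha_i) satisfy the defining relations of k, whose
   presentation then yields sigma. *)

Section CommutatorBracket.
Variables (R : pzRingType) (B : algType R).
Implicit Types x y z : B.

Lemma commutatorZl c x y : commutator (c *: x) y = c *: commutator x y.
Proof. by rewrite /commutator scalerBr -scalerAl -scalerAr. Qed.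

Lemma commutatorZr c x y : commutator x (c *: y) = c *: commutator x y.
Proof. by rewrite /commutator scalerBr -scalerAl -scalerAr. Qed.

Lemma commutatorDl x y z : commutator (x + y) z = commutator x z + commutator y z.
Proof. by rewrite /commutator mulrDl mulrDr opprD addrACA. Qed.

Lemma commutatorDr x y z : commutator z (x + y) = commutator z x + commutator z y.
Proof. by rewrite /commutator mulrDl mulrDr opprD addrACA. Qed.

Lemma commutator_suml (I : finType) (F : I -> B) z :
  commutator (\sum_i F i) z = \sum_i commutator (F i) z.
Proof. by rewrite /commutator mulr_suml mulr_sumr -sumrB. Qed.

Lemma commutator_sumr (I : finType) (F : I -> B) z :
  commutator z (\sum_i F i) = \sum_i commutator z (F i).
Proof. by rewrite /commutator mulr_suml mulr_sumr -sumrB. Qed.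

Lemma commutatorMr x y z : commutator x (y * z) = commutator x y * z + y * commutator x z.
Proof. by rewrite /commutator mulrBl mulrBr !mulrA addrA subrK. Qed.

Lemma commutator_jacobi x y z :
  commutator x (commutator y z) + commutator y (commutator z x)
  + commutator z (commutator x y) = 0.
Proof.
rewrite /commutator !(mulrBr, mulrBl) !mulrA.
set a := x*y*z; set b := x*z*y; set c := y*z*x; set d := y*x*z;
set e := z*x*y; set f := z*y*x.
rewrite !opprB !addrA; clearbody a b c d e f; rewrite !subrK.
by rewrite (addrAC _ (-d) b) (addrAC _ f b) subrK (addrAC _ (-d) (-f)) addrK subrK subrr.
Qed.

Lemma commutator_linear_l c x y z :
  commutator (c *: x + y) z = c *: commutator x z + commutator y z.
Proof. by rewrite commutatorDl commutatorZl. Qed.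

Lemma commutator_linear_r c x y z :
  commutator z (c *: x + y) = c *: commutator z x + commutator z y.
Proof. by rewrite commutatorDr commutatorZr. Qed.

Lemma commutatorxx x : commutator x x = 0.
Proof. exact: subrr. Qed.

Definition commutator_lie_alg : lie_alg R :=
  LieAlg commutator_linear_l commutator_linear_r commutatorxx commutator_jacobi.

End CommutatorBracket.

Section CliffordQuadratic.
Variables (R : comPzRingType) (B : algType R) (I : finType).
Variables (psi : I -> B) (Q : I -> I -> R).
Hypothesis psi_anticomm : forall u v, psi u * psi v + psi v * psi u = (Q u v)%:A.
Implicit Types M N : I -> I -> R.

Definition quadratic M : B := \sum_u \sum_v M u v *: (psi u * psi v).

Definition skew_contraction M u w : R := \sum_v (M u v - M v u) * Q v w.

Definition quadratic_bracket M N u z : R :=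
  \sum_w skew_contraction M u w * N w z + \sum_x N u x * skew_contraction M z x.

Lemma quadratic_ext M N : (forall u v, M u v = N u v) -> quadratic M = quadratic N.
Proof. by move=> eqMN; apply: eq_bigr => u _; apply: eq_bigr => v _; rewrite eqMN. Qed.

Lemma quadraticD M N : quadratic (fun u v => M u v + N u v) = quadratic M + quadratic N.
Proof.
rewrite /quadratic -big_split; apply: eq_bigr => u _.
by rewrite -big_split; apply: eq_bigr => v _; rewrite scalerDl.
Qed.

Lemma quadraticN M : quadratic (fun u v => - M u v) = - quadratic M.
Proof.
rewrite /quadratic -sumrN; apply: eq_bigr => u _.
by rewrite -sumrN; apply: eq_bigr => v _; rewrite scaleNr.
Qed.

Lemma commutator_monomial u v w :
  commutator (psi u * psi v) (psi w) = Q v w *: psi u - Q u w *: psi v.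
Proof.
have psi_vw : psi v * psi w = (Q v w)%:A - psi w * psi v.
  by rewrite -psi_anticomm (addrK (psi w * psi v)).
have psi_wu : psi w * psi u = (Q u w)%:A - psi u * psi w.
  by rewrite -psi_anticomm (addrC (psi u * psi w)) (addrK (psi u * psi w)).
rewrite /commutator -mulrA psi_vw mulrA psi_wu mulrBr mulrBl mulr_algr mulr_algl !mulrA.
by rewrite opprB addrA subrK.
Qed.

Lemma commutator_quadratic_generator M w :
  commutator (quadratic M) (psi w) = \sum_u skew_contraction M u w *: psi u.
Proof.
rewrite /quadratic commutator_suml.
under eq_bigr do rewrite commutator_suml.
under eq_bigr do under eq_bigr do
  rewrite commutatorZl commutator_monomial scalerBr !scalerA.
under [RHS]eq_bigr do rewrite /skew_contraction scaler_suml.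
under [RHS]eq_bigr do under eq_bigr do rewrite mulrBl scalerBl.
under eq_bigr do rewrite sumrB.
under [RHS]eq_bigr do rewrite sumrB.
by rewrite !sumrB; congr (_ - _); rewrite exchange_big.
Qed.

Lemma commutator_quadratic M N :
  commutator (quadratic M) (quadratic N) = quadratic (quadratic_bracket M N).
Proof.
rewrite {2}/quadratic commutator_sumr.
under eq_bigr do rewrite commutator_sumr.
under eq_bigr do under eq_bigr do
  rewrite commutatorZr commutatorMr !commutator_quadratic_generator
          mulr_suml mulr_sumr scalerDr !scaler_sumr.
under eq_bigr do under eq_bigr do under eq_bigr do rewrite -scalerAl scalerA.
under eq_bigr do rewrite big_split /=.
rewrite big_split /= /quadratic.
under [RHS]eq_bigr do under eq_bigr do
  rewrite /quadratic_bracket scalerDl !scaler_suml.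
under [RHS]eq_bigr do rewrite big_split /=.
rewrite [RHS]big_split /=; congr (_ + _).
  rewrite exchange_big /=; under eq_bigr do rewrite exchange_big /=.
  rewrite exchange_big /=.
  by apply: eq_bigr => u _; apply: eq_bigr => z _; apply: eq_bigr => w _; rewrite mulrC.
apply: eq_bigr => w _; rewrite exchange_big /=.
by apply: eq_bigr => u _; apply: eq_bigr => z _; rewrite -scalerAr scalerA.
Qed.

End CliffordQuadratic.

Section TensorCoefficients.
Variables (R : comPzRingType) (k l : nat) (G : 'M[R]_k).
Implicit Types (X : 'M[R]_k) (Ga : 'M[R]_l).

Definition tensor_coef X Ga (u v : 'I_k * 'I_l) : R := X u.1 v.1 * Ga u.2 v.2.

Definition clifford_gram (u v : 'I_k * 'I_l) : R := G u.1 v.1 * (u.2 == v.2)%:R.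

Lemma sum_pair (V : nmodType) (F : 'I_k * 'I_l -> V) :
  \sum_v F v = \sum_a \sum_g F (a, g).
Proof. by rewrite pair_bigA; apply: eq_bigr => -[]. Qed.

Lemma Jhat_quadratic (B : algType R) (phi : 'I_k -> 'I_l -> B) X Ga :
  Jhat phi X Ga = quadratic (fun u => phi u.1 u.2) (tensor_coef X Ga).
Proof.
rewrite /Jhat /quadratic sum_pair; apply: eq_bigr => a _.
rewrite exchange_big; apply: eq_bigr => g _; rewrite sum_pair /=.
by apply: eq_bigr => b _; apply: eq_bigr => d _.
Qed.

Lemma skew_contraction_tensor X Ga u w : X^T = X -> Ga^T = - Ga ->
  skew_contraction clifford_gram (tensor_coef X Ga) u w
  = 2%:R * ((X *m G) u.1 w.1 * Ga u.2 w.2).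
Proof.
move=> /matrixP X_sym /matrixP Ga_skew.
rewrite /skew_contraction sum_pair mxE mulr_suml mulr_sumr.
apply: eq_bigr => a _; rewrite (bigD1 w.2) //= big1 ?addr0; last first.
  by move=> g /negbTE g_w; rewrite /clifford_gram /= g_w !mulr0.
move: (X_sym a u.1) (Ga_skew w.2 u.2); rewrite !mxE /tensor_coef /clifford_gram /= eqxx.
by move=> -> ->; rewrite mulr1; ring.
Qed.

Lemma quadratic_bracket_tensor X X' Ga Ga' u z : G^T = G -> X^T = X -> Ga^T = - Ga ->
  quadratic_bracket clifford_gram (tensor_coef X Ga) (tensor_coef X' Ga') u z
  = tensor_coef (2%:R *: (X *m G *m X')) (Ga *m Ga') u z
    - tensor_coef (2%:R *: (X' *m G *m X)) (Ga' *m Ga) u z.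
Proof.
move=> G_sym X_sym Ga_skew; rewrite /quadratic_bracket.
under eq_bigr do rewrite skew_contraction_tensor //.
under [S in _ + S = _]eq_bigr do rewrite skew_contraction_tensor //.
have XG_tr a : (X *m G) z.1 a = (G *m X) a z.1.
  by rewrite -[G *m X]trmxK trmx_mul G_sym X_sym [RHS]mxE.
have Ga_tr g : Ga z.2 g = - Ga g z.2.
  by have := congr1 (fun M : 'M_l => M g z.2) Ga_skew; rewrite !mxE.
rewrite /tensor_coef -[X' *m G *m X]mulmxA !sum_pair.
rewrite /= ![((2%:R *: _ : 'M_k) _ _)]mxE ![(_ *m _) u.1 z.1]mxE ![(_ *m _) u.2 z.2]mxE.
rewrite -!mulrA !big_distrlr !mulr_sumr -sumrB -big_split /=.
apply: eq_bigr => a _; rewrite !mulr_sumr -sumrB -big_split /=.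
by apply: eq_bigr => g _; rewrite XG_tr Ga_tr; ring.
Qed.

End TensorCoefficients.

Section JhatAlgebra.
Variables (R : comPzRingType) (B : algType R) (k l : nat).
Variables (G : 'M[R]_k) (phi : 'I_k -> 'I_l -> B).
Hypotheses (phi_rel : clifford_rel G phi) (G_sym : G^T = G).
Implicit Types (X : 'M[R]_k) (Ga : 'M[R]_l).

Lemma JhatDl X X' Ga : Jhat phi (X + X') Ga = Jhat phi X Ga + Jhat phi X' Ga.
Proof.
rewrite !Jhat_quadratic -quadraticD.
by apply: quadratic_ext => u v; rewrite /tensor_coef mxE mulrDl.
Qed.

Lemma JhatNr X Ga : Jhat phi X (- Ga) = - Jhat phi X Ga.
Proof.
rewrite !Jhat_quadratic -quadraticN.
by apply: quadratic_ext => u v; rewrite /tensor_coef mxE mulrN.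
Qed.

Lemma commutator_Jhat X X' Ga Ga' : X^T = X -> Ga^T = - Ga ->
  commutator (Jhat phi X Ga) (Jhat phi X' Ga')
  = Jhat phi (2%:R *: (X *m G *m X')) (Ga *m Ga')
    - Jhat phi (2%:R *: (X' *m G *m X)) (Ga' *m Ga).
Proof.
move=> X_sym Ga_skew.
rewrite !Jhat_quadratic (commutator_quadratic (Q := clifford_gram G)); last first.
  by move=> u v; apply: phi_rel.
rewrite -quadraticN -quadraticD; apply: quadratic_ext => u z.
exact: quadratic_bracket_tensor.
Qed.

End JhatAlgebra.

Section JhatRelations.
Variables (F : numFieldType) (B : algType F) (k l : nat).
Variables (G : 'M[F]_k) (phi : 'I_k -> 'I_l -> B).
Hypotheses (phi_rel : clifford_rel G phi) (G_sym : G^T = G).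
Implicit Types (X : 'M[F]_k) (Ga : 'M[F]_l).

Lemma Jhat_acomG X X' X'' Ga : acomG G X X' = 2%:R^-1 *: X'' ->
  Jhat phi (2%:R *: (X *m G *m X')) Ga + Jhat phi (2%:R *: (X' *m G *m X)) Ga
  = Jhat phi X'' Ga.
Proof.
move=> acom; rewrite -JhatDl -scalerDr -/(acomG G X X') acom scalerA.
by rewrite mulfV ?pnatr_eq0 // scale1r.
Qed.

Lemma commutator_Jhat_commuting X X' Ga Ga' : X^T = X -> Ga^T = - Ga ->
  brG G X X' = 0 -> Ga *m Ga' = Ga' *m Ga ->
  commutator (Jhat phi X Ga) (Jhat phi X' Ga') = 0.
Proof.
move=> X_sym Ga_skew /subr0_eq XX' GaGa'.
by rewrite (commutator_Jhat phi_rel G_sym) // XX' GaGa' subrr.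
Qed.

Lemma commutator_Jhat_braided X X' X'' Ga Ga' : X^T = X -> Ga^T = - Ga ->
  Ga *m Ga = - 1%:M -> Ga *m Ga' *m Ga = Ga' ->
  acomG G X X' = 2%:R^-1 *: X'' -> acomG G X'' X = 2%:R^-1 *: X' ->
  commutator (Jhat phi X Ga) (commutator (Jhat phi X Ga) (Jhat phi X' Ga'))
  = - Jhat phi X' Ga'.
Proof.
move=> X_sym Ga_skew GaGa braid acomXX' acomX''X.
have anticomm : Ga' *m Ga = - (Ga *m Ga').
  by rewrite -{1}braid -!mulmxA GaGa mulmxN mulmx1 mulmxN.
rewrite (commutator_Jhat phi_rel G_sym) // anticomm JhatNr opprK (Jhat_acomG _ acomXX').
rewrite (commutator_Jhat phi_rel G_sym) // mulmxA GaGa mulNmx mul1mx braid JhatNr -opprD addrC.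
by rewrite (Jhat_acomG _ acomX''X).
Qed.

End JhatRelations.

Section SpinMatrices.
Variables (F : realFieldType) (l : nat).
Implicit Types r s : 'M[F]_l.

Lemma spin_generator_sqr r :
  r *m r = - (4%:R^-1 *: 1%:M) -> (2%:R *: r) *m (2%:R *: r) = - 1%:M.
Proof.
move=> rr; rewrite -scalemxAl -scalemxAr scalerA rr scalerN scalerA.
by rewrite (_ : 2%:R * 2%:R * 4%:R^-1 = 1) ?scale1r //; lra.
Qed.

Lemma spin_generators_commute r s :
  r *m s - s *m r = 0 -> (2%:R *: r) *m (2%:R *: s) = (2%:R *: s) *m (2%:R *: r).
Proof. by move=> /subr0_eq rs; rewrite -!scalemxAl -!scalemxAr rs. Qed.

Lemma spin_generators_braid r s : r *m r = - (4%:R^-1 *: 1%:M) ->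
  r *m (r *m s - s *m r) - (r *m s - s *m r) *m r = - s ->
  (2%:R *: r) *m (2%:R *: s) *m (2%:R *: r) = 2%:R *: s.
Proof.
move=> rr rel.
have rrs : r *m (r *m s) = - (4%:R^-1 *: s).
  by rewrite mulmxA rr mulNmx -scalemxAl mul1mx.
have srr : s *m r *m r = - (4%:R^-1 *: s).
  by rewrite -mulmxA rr mulmxN -scalemxAr mulmx1.
(* [rel] now reads -s/2 - 2 r s r = -s, i.e. r s r = s/4. *)
rewrite mulmxBr mulmxBl rrs srr mulmxA in rel.
rewrite -!(scalemxAl, scalemxAr) !scalerA.
apply/matrixP => i j; move/matrixP/(_ i j): rel; rewrite !mxE => rel; lra.
Qed.

End SpinMatrices.

Section LieMorphisms.
Variables (R : pzRingType) (K : lie_alg R) (M : lmodType R).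
Variable f : K -> M.
Hypothesis f_lin : forall (a : R) (x y : K), f (a *: x + y) = a *: f x + f y.

Lemma lie_morph0 : f 0 = 0.
Proof. by have := f_lin 1 0 0; rewrite !scale1r addr0 -{1}[f 0]addr0 => /addrI. Qed.

Lemma lie_morphN x : f (- x) = - f x.
Proof. by rewrite -[- x]addr0 -scaleN1r f_lin lie_morph0 addr0 scaleN1r. Qed.

End LieMorphisms.

Section Roots.
Variables (n : nat) (A : 'M[int]_n).

Lemma simply_laced_gcm_sym i j : simply_laced_gcm A -> A j i = A i j.
Proof.
move=> [_ [A_offdiag A_zero]]; have [-> // | ij] := eqVneq i j.
have ji : j != i by rewrite eq_sym.
by have := A_zero i j; case: (A_offdiag i j ij) => ->; case: (A_offdiag j i ji) => ->.
Qed.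

Lemma rootform_simple i j : rootform A (simple_root i) (simple_root j) = A i j.
Proof.
rewrite /rootform (bigD1 i) //= [X in _ + X]big1 ?addr0; last first.
  by move=> a /negbTE ai; rewrite big1 // => b _; rewrite !mxE ai /= !mul0r.
rewrite (bigD1 j) //= big1 ?addr0; last first.
  by move=> b /negbTE bj; rewrite !mxE bj /= mulr0.
by rewrite !mxE !eqxx /= mul1r mulr1.
Qed.

Lemma rootformDl al al' be :
  rootform A (al + al') be = rootform A al be + rootform A al' be.
Proof.
rewrite /rootform -big_split; apply: eq_bigr => i _.
by rewrite -big_split; apply: eq_bigr => j _; rewrite mxE !mulrDl.
Qed.

Lemma simple_root_in_lambda i : in_lambda A (simple_root i).
Proof. by apply/orP; left; apply/existsP; exists i. Qed.

Lemma edge_root_in_lambda i j :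
  A i j = -1 -> in_lambda A (simple_root i + simple_root j).
Proof.
by move=> Aij; apply/orP; right; apply/existsP; exists i; apply/existsP; exists j;
  rewrite Aij !eqxx.
Qed.

End Roots.

Unset Implicit Arguments.

Theorem proposition3p5
  (R : realType) (n : nat) (A : 'M[int]_n) (HA : simply_laced_gcm A)
  (K : lie_alg R) (Xk : 'I_n -> K) (HK : is_presented_k A Xk)
  (l : nat) (rho : K -> 'M[R]_l)
  (Hrho : lie_morph (fun M N : 'M[R]_l => M *m N - N *m M) rho)
  (Hspin : forall i, rho (Xk i) *m rho (Xk i) = - (4%:R^-1 *: 1%:M))
  (Hanti : forall i, (rho (Xk i))^T = - rho (Xk i))
  (k : nat) (G : 'M[R]_k) (HGsym : G^T = G) (HGnd : G \in unitmx)
  (X : 'rV[int]_n -> 'M[R]_k)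
  (HXsym : forall al, in_lambda A al -> (X al)^T = X al)
  (HX0 : forall al be, in_lambda A al -> in_lambda A be ->
     rootform A al be = 0 -> brG G (X al) (X be) = 0)
  (HXm : forall al be, in_lambda A al -> in_lambda A be ->
     rootform A al be = -1 -> in_lambda A (al + be) ->
     acomG G (X al) (X be) = 2%:R^-1 *: X (al + be))
  (HXp : forall al be, in_lambda A al -> in_lambda A be ->
     rootform A al be = 1 -> in_lambda A (al - be) ->
     acomG G (X al) (X be) = 2%:R^-1 *: X (al - be))
  (Aalg : algType R) (phi : 'I_k -> 'I_l -> Aalg) (HAalg : is_clifford G phi) :
  exists sigma : K -> Aalg,
    lie_morph (@commutator R Aalg) sigma /\
    forall i, sigma (Xk i) = Jhat phi (X (simple_root i)) (2%:R *: rho (Xk i)).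
Proof.
have [Xk_rel Xk_univ] := HK; have [phi_rel _] := HAalg; have [rho_lin rho_br] := Hrho.
have Ga_skew i : (2%:R *: rho (Xk i))^T = - (2%:R *: rho (Xk i)).
  by rewrite linearZ /= Hanti scalerN.
pose J i := Jhat phi (X (simple_root i)) (2%:R *: rho (Xk i)).
suff J_rel : k_relations A (L := commutator_lie_alg Aalg) J.
  have [sigma [[sigma_morph sigma_Xk] _]] := Xk_univ (commutator_lie_alg Aalg) J J_rel.
  by exists sigma.
move=> i j; have [edge_rel orth_rel] := Xk_rel i j.
have in_i := simple_root_in_lambda A i; have in_j := simple_root_in_lambda A j.
have X_sym := HXsym _ in_i.
split => Aij.
- have edge_ij := edge_root_in_lambda Aij.
  have rf_ij_i : rootform A (simple_root i + simple_root j) (simple_root i) = 1.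
    by rewrite rootformDl !rootform_simple (simply_laced_gcm_sym _ _ HA) Aij; case: HA => ->.
  have ij_i : simple_root i + simple_root j - simple_root i = simple_root j.
    by rewrite addrC addKr.
  apply: (commutator_Jhat_braided phi_rel HGsym X_sym (Ga_skew i)).
  + exact: spin_generator_sqr.
  + apply: spin_generators_braid => //.
    by have := congr1 rho (edge_rel Aij); rewrite !rho_br (lie_morphN rho_lin).
  + by rewrite HXm ?rootform_simple.
  + by have := HXp _ _ edge_ij in_i rf_ij_i; rewrite ij_i; apply.
- apply: (commutator_Jhat_commuting phi_rel HGsym X_sym (Ga_skew i)).
  + by rewrite HX0 ?rootform_simple.
  + apply: spin_generators_commute.
    by have := congr1 rho (orth_rel Aij); rewrite rho_br (lie_morph0 rho_lin).
Qed.
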